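(* Let $n\ge 2$, and let $L=(\ell_1,\dots,\ell_n)\in\mathbb{Z}^n$ and $K=(k_1,\dots,k_n)\in\mathbb{Z}^n$ with $0<k_i<\ell_i$ for each $1\le i\le n$. Let $\tau=\prod_{i=1}^n\ell_i$, $\kappa=\prod_{i=1}^n k_i$, $G=\mathbb{Z}_{\tau-\kappa}$, and assume that $k_i$ is invertible in the ring $G$ for each $2\le i\le n$. Define $\beta_1=1$ and $\beta_{i+1}=k_{i+1}^{-1}\ell_i\beta_i$ for $1\le i\le n-1$ (computed in $G$). Then $\mathcal{S}_{L,K}$ splits $G$ with the splitting sequence $\beta=\beta_1,\dots,\beta_n$.
   Context: For integer vectors $L,K$ with $0<k_i<\ell_i$, the discrete $n$-dimensional chair is $\mathcal{S}_{L,K}=\{(x_1,\dots,x_n)\in\mathbb{Z}^n: 0\le x_i<\ell_i \text{ for all } i, \text{ and there exists } j \text{ with } x_j<\ell_j-k_j\}$; it has $\prod\ell_i-\prod k_i$ elements. $\mathbb{Z}_m$ denotes the ring of integers modulo $m$. For an Abelian group $G$, a sequence $\beta=\beta_1,\dots,\beta_n$ of elements of $G$, and $X=(x_1,\dots,x_n)\in\mathbb{Z}^n$, set $X\cdot\beta=\sum_{i=1}^n x_i\beta_i\in G$. A finite set $\mathcal{S}\subset\mathbb{Z}^n$ splits $G$ with splitting sequence $\beta$ if the set $\{\mathcal{E}\cdot\beta:\mathcal{E}\in\mathcal{S}\}$ consists of $|\mathcal{S}|$ distinct elements of $G$. *)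

From mathcomp Require Import all_boot all_order all_algebra.
Set Implicit Arguments. Unset Strict Implicit. Unset Printing Implicit Defensive.
Import GRing.Theory Num.Theory.
Local Open Scope ring_scope.

(* Points of Z^n are finite functions 'I_n -> int (index i-1 for coordinate i). *)

Definition in_chair (n : nat) (L K : nat -> int) (X : {ffun 'I_n -> int}) : Prop :=
  (forall i : 'I_n, 0 <= X i < L i) /\ (exists j : 'I_n, X j < L j - K j).

Definition dotg (G : zmodType) (n : nat) (X : {ffun 'I_n -> int}) (beta : 'I_n -> G) : G :=
  \sum_(i < n) beta i *~ X i.

Definition splits (G : zmodType) (n : nat) (S : {ffun 'I_n -> int} -> Prop)
    (beta : 'I_n -> G) : Prop :=
  forall X Y, S X -> S Y -> dotg X beta = dotg Y beta -> X = Y.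

(* beta_1 = 1, beta_{i+1} = k_{i+1}^{-1} l_i beta_i, in 0-based nat indexing:
   betaseq 0 = 1, betaseq (i+1) = (k (i+1))^{-1} * l i * betaseq i. *)
Fixpoint betaseq (R : unitRingType) (l k : nat -> R) (i : nat) : R :=
  match i with
  | 0 => 1
  | i'.+1 => (k i)^-1 * l i' * betaseq l k i'
  end.

From mathcomp Require Import all_boot all_order all_algebra.
From mathcomp Require Import zify ring lra.
Import Order.TTheory GRing.Theory Num.Theory.
Set Implicit Arguments.
Unset Strict Implicit.
Unset Printing Implicit Defensive.
Local Open Scope ring_scope.

(* Multiplying by k_2 ... k_n turns beta_i into the integer weight
   w_i = l_1 ... l_{i-1} k_{i+1} ... k_n, so X . beta = Y . beta forces
   sum_i (x_i - y_i) w_i to be a multiple t (tau - kappa).  As tau - kappa is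
   coprime to k_2, ..., k_n, such a relation telescopes into integer "carries"
   e_1, ..., e_{n+1} with e_1 = e_{n+1} = t and
   x_i - y_i = e_{i+1} l_i - e_i k_i.  Since x_i - y_i < l_i, a positive carry
   can only grow towards smaller indices; by cyclicity a positive carry is then
   constant, which gives x_i >= l_i - k_i for every i, i.e. X outside the chair.
   Hence all carries are <= 0, by symmetry >= 0, and X = Y. *)

Section Carries.

Variables (n : nat) (l k x y e : nat -> int).
Hypothesis k_bound : forall j, (j < n)%N -> 0 <= k j <= l j.
Hypothesis x_lt : forall j, (j < n)%N -> x j < l j.
Hypothesis y_ge0 : forall j, (j < n)%N -> 0 <= y j.
Hypothesis x_short : exists2 j, (j < n)%N & x j < l j - k j.
Hypothesis e_cyclic : e 0%N = e n.
Hypothesis sub_carry : forall j, (j < n)%N -> x j - y j = e j.+1 * l j - e j * k j.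

Lemma carry_le_pred j : (j < n)%N -> 1 <= e j.+1 -> e j.+1 <= e j.
Proof.
move=> lt_jn e_ge1; rewrite leNgt; apply/negP => lt_e.
have /andP[k_ge0 k_le] := k_bound lt_jn.
have := sub_carry lt_jn; have := x_lt lt_jn; have := y_ge0 lt_jn.
(* Otherwise [x_j - y_j >= (e_{j+1} - 1) (l_j - k_j) + l_j >= l_j]. *)
have : 0 <= (e j.+1 - 1 - e j) * k j by apply: mulr_ge0; lia.
have : 0 <= (e j.+1 - 1) * (l j - k j) by apply: mulr_ge0; lia.
nia.
Qed.

Lemma carry_le_below i j : (i <= j <= n)%N -> 1 <= e j -> e j <= e i.
Proof.
elim: j => [|j IH] /andP[le_ij lt_jn] e_ge1.
  by move: le_ij; rewrite leqn0 => /eqP ->.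
case: ltngtP le_ij => // [lt_ij | ->] _; last exact: lexx.
have e_le := carry_le_pred lt_jn e_ge1.
have := IH (ltac:(by rewrite -ltnS lt_ij ltnW)) (le_trans e_ge1 e_le).
lia.
Qed.

Lemma carry_le0 j : (j <= n)%N -> e j <= 0.
Proof.
have e0_le0 : e 0%N <= 0.
  rewrite leNgt; apply/negP => e0_gt0.
  have e_const i : (i <= n)%N -> e i = e 0%N.
    move=> le_in; have en_ge1 : 1 <= e n by rewrite -e_cyclic; lia.
    have := carry_le_below (i := i) (j := n) (ltac:(by rewrite le_in leqnn)) en_ge1.
    have := carry_le_below (i := 0) (j := i) (ltac:(by rewrite le_in)).
    lia.
  have [j0 lt_j0n x_j0] := x_short.
  have := sub_carry lt_j0n; rewrite (e_const _ lt_j0n) (e_const _ (ltnW lt_j0n)).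
  have /andP[_ k_le] := k_bound lt_j0n; have := y_ge0 lt_j0n.
  have : 0 <= (e 0%N - 1) * (l j0 - k j0) by apply: mulr_ge0; lia.
  nia.
move=> le_jn; rewrite leNgt; apply/negP => e_gt0.
have := carry_le_below (i := 0) (j := j) (ltac:(by rewrite le_jn)).
lia.
Qed.

End Carries.

Section ChairWeights.

Variables (n : nat) (l k : nat -> int).
Hypothesis k_bound : forall j, (j < n)%N -> 0 < k j < l j.

Local Notation lpre j := (\prod_(0 <= i < j) l i).
Local Notation ksuf j := (\prod_(j <= i < n) k i).
Local Notation chair_size := (lpre n - ksuf 0).

Lemma lpre_gt0 j : (j <= n)%N -> 0 < lpre j.
Proof.
move=> le_jn; rewrite big_nat_cond prodr_gt0 // => i /andP[/andP[_ lt_ij] _].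
by have /andP[k_gt0 k_lt] := k_bound (leq_trans lt_ij le_jn); apply: lt_trans k_lt.
Qed.

Lemma ksuf_gt0 j : 0 < ksuf j.
Proof.
by rewrite big_nat_cond prodr_gt0 // => i /andP[/andP[_ /k_bound /andP[]]].
Qed.

Lemma lpre_dvd j j' : (j <= j')%N -> (lpre j %| lpre j')%Z.
Proof. by move=> le_jj'; rewrite (big_cat_nat (leq0n j) le_jj') dvdz_mulr. Qed.

Lemma ksuf_dvd j j' : (j <= j' <= n)%N -> (ksuf j' %| ksuf j)%Z.
Proof. by case/andP=> le_jj' le_j'n; rewrite (big_cat_nat le_jj' le_j'n) dvdz_mull. Qed.

Hypothesis coprime_k : forall j, (0 < j < n)%N -> coprimez chair_size (k j).

Lemma coprimez_lpre_ksuf j : (j <= n)%N -> coprimez (lpre j) (ksuf j).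
Proof.
case: j => [|j] le_jn; first by rewrite big_geq // /coprimez gcdzC gcdz1.
have coprime_ksuf : coprimez chair_size (ksuf j.+1).
  set s := chair_size; rewrite big_nat_cond.
  elim/big_ind: _ => [|a b cop_a cop_b|i /andP[/andP[lt_ji lt_in] _]].
  - by rewrite /coprimez gcdz1.
  - by rewrite coprimezMr cop_a.
  - by rewrite coprime_k // lt_in (leq_ltn_trans _ lt_ji).
have g_dvd : (gcdz (lpre j.+1) (ksuf j.+1) %| chair_size)%Z.
  apply: rpredB; first exact: dvdz_trans (dvdz_gcdl _ _) (lpre_dvd le_jn).
  by apply: dvdz_trans (dvdz_gcdr _ _) (ksuf_dvd _); rewrite le_jn.
have : (gcdz (lpre j.+1) (ksuf j.+1) %| gcdz chair_size (ksuf j.+1))%Z.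
  by rewrite dvdz_gcd g_dvd dvdz_gcdr.
by rewrite (eqP coprime_ksuf) dvdzE /= dvdn1 /coprimez /gcdz => /eqP ->.
Qed.

Local Notation weight j := (lpre j * ksuf j.+1).

Section Decomposition.

Variables (d : nat -> int) (t : int).
Hypothesis weighted_sum : \sum_(0 <= j < n) d j * weight j = t * chair_size.

Local Notation partial j := (\sum_(0 <= i < j) d i * weight i).

Lemma dvdz_partial_sum j : (j <= n)%N -> (lpre j * ksuf j %| partial j + t * ksuf 0)%Z.
Proof.
move=> le_jn; rewrite Gauss_dvdz ?coprimez_lpre_ksuf //; apply/andP; split.
  have -> : partial j + t * ksuf 0 = t * lpre n - \sum_(j <= i < n) d i * weight i.
    move: weighted_sum; rewrite (big_cat_nat (leq0n j) le_jn) /=; lra.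
  rewrite rpredB ?dvdz_mull ?lpre_dvd // [\sum_(_ <= _ < _) _]big_nat_cond rpred_sum // => i.
  by case/andP=> /andP[le_ji _] _; rewrite dvdz_mull ?dvdz_mulr ?lpre_dvd.
rewrite rpredD ?dvdz_mull ?ksuf_dvd ?le_jn // [\sum_(_ <= _ < _) _]big_nat_cond rpred_sum // => i.
by case/andP=> /andP[_ lt_ij] _; rewrite !dvdz_mull ?ksuf_dvd ?lt_ij.
Qed.

Lemma carry_decomposition :
  exists e : nat -> int, e 0%N = e n /\
    forall j, (j < n)%N -> d j = e j.+1 * l j - e j * k j.
Proof.
have ksuf_neq0 j : ksuf j != 0 by rewrite gt_eqF ?ksuf_gt0.
have lpre_neq0 j : (j <= n)%N -> lpre j != 0 by move=> le_jn; rewrite gt_eqF ?lpre_gt0.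
pose e j := ((partial j + t * ksuf 0) %/ (lpre j * ksuf j))%Z.
have eK j : (j <= n)%N -> e j * (lpre j * ksuf j) = partial j + t * ksuf 0.
  by move=> le_jn; rewrite divzK ?dvdz_partial_sum.
exists e; split.
  have := eK 0%N (leq0n n); have := eK n (leqnn n).
  rewrite weighted_sum !(big_geq (leqnn 0)) (big_geq (leqnn n)) add0r mul1r mulr1.
  move=> e_n e_0; have -> : e 0%N = t by apply: (mulIf (ksuf_neq0 0)).
  by apply: (mulIf (lpre_neq0 _ (leqnn n))); rewrite e_n; ring.
clearbody e; move=> j lt_jn; have := eK _ lt_jn; have := eK _ (ltnW lt_jn).
have lpreS : lpre j.+1 = lpre j * l j by rewrite big_nat_recr.
have partialS : partial j.+1 = partial j + d j * weight j by rewrite big_nat_recr.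
have ksufS : ksuf j = k j * ksuf j.+1 by rewrite big_ltn.
rewrite lpreS partialS ksufS => e_j e_j1.
have weight_neq0 : weight j != 0 by rewrite mulf_neq0 ?ksuf_neq0 // lpre_neq0 // ltnW.
by apply: (mulIf weight_neq0); lia.
Qed.

End Decomposition.

Lemma chair_eq_of_weighted_sum (x y : nat -> int) (t : int) :
  (forall j, (j < n)%N -> 0 <= x j < l j) ->
  (forall j, (j < n)%N -> 0 <= y j < l j) ->
  (exists2 j, (j < n)%N & x j < l j - k j) ->
  (exists2 j, (j < n)%N & y j < l j - k j) ->
  \sum_(0 <= j < n) (x j - y j) * weight j = t * chair_size ->
  forall j, (j < n)%N -> x j = y j.
Proof.
move=> x_bound y_bound x_short y_short sum_eq.
have [e [e_cyclic sub_carry]] := carry_decomposition sum_eq.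
have k_le_l j : (j < n)%N -> 0 <= k j <= l j.
  by move/k_bound=> /andP[k_gt0 k_lt]; rewrite !ltW.
have x_lt j : (j < n)%N -> x j < l j by move/x_bound=> /andP[].
have y_lt j : (j < n)%N -> y j < l j by move/y_bound=> /andP[].
have x_ge0 j : (j < n)%N -> 0 <= x j by move/x_bound=> /andP[].
have y_ge0 j : (j < n)%N -> 0 <= y j by move/y_bound=> /andP[].
have e_le0 j : (j <= n)%N -> e j <= 0.
  exact: carry_le0 k_le_l x_lt y_ge0 x_short e_cyclic sub_carry j.
have e_ge0 j : (j <= n)%N -> 0 <= e j.
  have neg_carry i : (i < n)%N -> y i - x i = - e i.+1 * l i - - e i * k i.
    by move=> lt_in; rewrite -opprB sub_carry //; ring.
  move=> le_jn; rewrite -oppr_le0.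
  exact: carry_le0 k_le_l y_lt x_ge0 y_short (congr1 -%R e_cyclic) neg_carry j le_jn.
have e_eq0 j : (j <= n)%N -> e j = 0.
  by move=> le_jn; apply/eqP; rewrite eq_le e_le0 ?e_ge0.
move=> j lt_jn; have := sub_carry j lt_jn.
rewrite (e_eq0 j.+1 lt_jn) (e_eq0 j (ltnW lt_jn)) !mul0r subr0; lia.
Qed.

End ChairWeights.

Lemma intr_Zp_eq0 (p : nat) (z : int) :
  (1 < p)%N -> ((z%:~R : 'Z_p) == 0) = (p%:Z %| z)%Z.
Proof.
move=> p_gt1; rewrite [z in LHS]intEsign rmorphM rmorph_sign mulr_sign.
by case: ifP => _; rewrite ?oppr_eq0 -natz rmorph_nat -(inj_eq val_inj) /= val_Zp_nat.
Qed.

Lemma intr_Zp_unitE (p : nat) (z : int) :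
  (1 < p)%N -> ((z%:~R : 'Z_p) \is a GRing.unit) = coprimez p z.
Proof.
move=> p_gt1; rewrite [z in LHS]intEsign rmorphM rmorph_sign mulr_sign.
by case: ifP => _; rewrite ?unitrN -natz rmorph_nat unitZpE.
Qed.

Lemma mulr_dotg (R : pzRingType) (n : nat) (X : {ffun 'I_n -> int}) (beta : 'I_n -> R)
    (c : R) (w : 'I_n -> int) :
  (forall i, c * beta i = (w i)%:~R) -> c * dotg X beta = (\sum_(i < n) X i * w i)%:~R.
Proof.
move=> c_beta; rewrite /dotg mulr_sumr rmorph_sum; apply: eq_bigr => i _.
by rewrite mulrzAr c_beta -mulrzr -intrM mulrC.
Qed.

Lemma dvdz_dotg_eq (m n : nat) (X Y : {ffun 'I_n -> int}) (beta : 'I_n -> 'Z_m)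
    (c : 'Z_m) (w : 'I_n -> int) :
  (1 < m)%N -> (forall i, c * beta i = (w i)%:~R) -> dotg X beta = dotg Y beta ->
  (m%:Z %| \sum_(i < n) (X i - Y i) * w i)%Z.
Proof.
move=> m_gt1 c_beta eq_dot; rewrite -intr_Zp_eq0 //.
under eq_bigr do rewrite mulrBl.
by rewrite sumrB mulrzBr -!(mulr_dotg _ c_beta) eq_dot subrr.
Qed.

Lemma betaseq_scaled (R : comUnitRingType) (l k : nat -> R) j :
  (forall i, (0 < i <= j)%N -> k i \is a GRing.unit) ->
  \prod_(1 <= i < j.+1) k i * betaseq l k j = \prod_(0 <= i < j) l i.
Proof.
elim: j => [|j IH] k_unit; first by rewrite !big_geq // mulr1.
rewrite big_nat_recr //= [RHS]big_nat_recr //= -IH; last first.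
  by move=> i /andP[i_gt0 le_ij]; rewrite k_unit // i_gt0 leqW.
by rewrite -!mulrA mulVKr ?k_unit ?leqnn // (mulrC (l j)).
Qed.

Lemma betaseq_intr_weight (R : comUnitRingType) (n : nat) (L K : nat -> int) i :
  (i < n)%N -> (forall j, (0 < j < n)%N -> ((K j)%:~R : R) \is a GRing.unit) ->
  (\prod_(1 <= j < n) K j)%:~R * betaseq (fun j => (L j)%:~R) (fun j => (K j)%:~R) i
    = (\prod_(0 <= j < i) L j * \prod_(i.+1 <= j < n) K j)%:~R :> R.
Proof.
move=> lt_in k_unit; rewrite (big_cat_nat (n := i.+1)) //= rmorphM !rmorph_prod mulrAC.
rewrite betaseq_scaled ?rmorphM ?rmorph_prod // => j /andP[j_gt0 le_ji].
by rewrite k_unit // j_gt0 (leq_ltn_trans le_ji).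
Qed.

Lemma prod_sub_prod_ge (n : nat) (l k : nat -> int) :
  (forall j, (j < n)%N -> 0 < k j < l j) ->
  n%:Z <= \prod_(0 <= j < n) l j - \prod_(0 <= j < n) k j.
Proof.
elim: n => [|n IH] kl_bound; first by rewrite !big_geq.
have := IH (fun j lt_jn => kl_bound j (leqW lt_jn)).
have b_gt0 : 0 < \prod_(0 <= j < n) k j.
  by rewrite big_nat_cond prodr_gt0 // => j /andP[/andP[_ /leqW /kl_bound /andP[]]].
rewrite !big_nat_recr //=; move: b_gt0.
set a := \prod_(0 <= j < n) l j; set b := \prod_(0 <= j < n) k j => b_gt0 ab_ge.
have /andP[k_gt0 k_lt] := kl_bound n (ltnSn n).
have : 0 <= (a - b) * (l n - 1) by apply: mulr_ge0; lia.
have : 0 <= (b - 1) * (l n - k n - 1) by apply: mulr_ge0; lia.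
nia.
Qed.

Lemma in_chair_inord (n : nat) (L K : nat -> int) (X : {ffun 'I_n.+1 -> int}) :
  in_chair L K X ->
  (forall j, (j < n.+1)%N -> 0 <= X (inord j) < L j) /\
  (exists2 j, (j < n.+1)%N & X (inord j) < L j - K j).
Proof.
case=> X_bound [j0 X_j0]; split; last by exists j0; rewrite ?inord_val.
by move=> j lt_jn; have := X_bound (inord j); rewrite inordK.
Qed.

Theorem mainTheorem2 (n : nat) (L K : nat -> int) :
  (2 <= n)%N ->
  (forall i, (i < n)%N -> 0 < K i < L i) ->
  let tau := \prod_(0 <= i < n) L i in
  let kappa := \prod_(0 <= i < n) K i in
  let m := `|tau - kappa|%N in
  (forall i, (1 <= i < n)%N -> ((K i)%:~R : 'Z_m) \is a GRing.unit) ->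
  let beta := fun i : 'I_n =>
    betaseq (fun j => ((L j)%:~R : 'Z_m)) (fun j => ((K j)%:~R : 'Z_m)) (val i) in
  splits (@in_chair n L K) beta.
Proof.
case: n => [|n] // n_ge2 kl_bound tau kappa m k_unit beta X Y X_chair Y_chair eq_dot.
have size_ge := prod_sub_prod_ge kl_bound.
have m_eq : m%:Z = tau - kappa by rewrite gez0_abs // (le_trans _ size_ge).
have m_gt1 : (1 < m)%N by rewrite -ltz_nat m_eq (lt_le_trans _ size_ge).
have coprime_k j : (0 < j < n.+1)%N -> coprimez (tau - kappa) (K j).
  by move=> j_range; rewrite -m_eq -intr_Zp_unitE ?k_unit.
have /dvdzP[t sum_eq] := dvdz_dotg_eq m_gt1
  (fun i => betaseq_intr_weight L (ltn_ord i) k_unit) eq_dot.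
have [x_bound x_short] := in_chair_inord X_chair.
have [y_bound y_short] := in_chair_inord Y_chair.
apply/ffunP => i; rewrite -[i]inord_val.
apply: (chair_eq_of_weighted_sum kl_bound coprime_k x_bound y_bound x_short y_short (t := t) _ (ltn_ord i)).
by rewrite -/tau -/kappa -m_eq -sum_eq big_mkord; apply: eq_bigr => j _; rewrite !inord_val.
Qed.
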